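(* Let $\Gamma=\langle x,y,z\mid xy^{-1}=yx^{-1},\ xz^{-1}=zx^{-1},\ yz^{-1}=zy^{-1}\rangle$ with generating set $\Delta=\{x,y,z\}$. There is no homogeneous scalar quantum walk on $C_\Delta(\Gamma)$.
   Context: The Cayley graph $C_\Delta(\Gamma)$ has vertex set $\Gamma$ and directed edges $(g,g\delta)$, $g\in\Gamma,\delta\in\Delta$. Let $\ell^2(\Gamma)$ have orthonormal basis $\{|g\rangle\}_{g\in\Gamma}$ and for $\delta\in\Gamma$ let $U_\delta|g\rangle=|g\delta\rangle$. A homogeneous scalar quantum walk on $C_\Delta(\Gamma)$ is a unitary operator $W=\sum_{\delta\in\Delta}W_\delta U_\delta$ with all complex coefficients $W_\delta$ nonzero. *)

From HB Require Import structures.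
From mathcomp Require Import all_boot all_order all_algebra.
From mathcomp Require Import complex.
From mathcomp Require Import classical_sets reals constructive_ereal esum.
Set Implicit Arguments. Unset Strict Implicit. Unset Printing Implicit Defensive.
Import Order.TTheory GRing.Theory Num.Theory.
Local Open Scope ring_scope.

Definition rels (H : groupType) (a b c : H) : Prop :=
  [/\ (a / b = b / a)%g, (a / c = c / a)%g & (b / c = c / b)%g].

(* group homomorphism (multiplicativity suffices for groups) *)
Definition group_hom (G H : groupType) (f : G -> H) : Prop :=
  forall a b : G, f (a * b)%g = (f a * f b)%g.

(* (G; x, y, z) is a presentation of <x,y,z | rels>: the relations hold and
   (universal property) for every group H and every triple satisfying the
   relations there is a unique group homomorphism G -> H sending x,y,z to it. *)
Definition presents (G : groupType) (x y z : G) : Prop :=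
  rels x y z /\
  forall (H : groupType) (a b c : H), rels a b c ->
    exists f : G -> H,
      [/\ group_hom f, f x = a, f y = b, f z = c &
          forall g : G -> H, group_hom g -> g x = a -> g y = b -> g z = c ->
            g =1 f].

Section L2.
Variables (R : realType) (G : groupType).

Definition csqnorm (c : R[i]) : R := (complex.Re c) ^+ 2 + (complex.Im c) ^+ 2.

Definition l2norm2 (f : G -> R[i]) : \bar R :=
  esum [set: G] (fun g => (csqnorm (f g))%:E).

Definition in_l2 (f : G -> R[i]) : Prop := (l2norm2 f < +oo)%E.

(* U_d |g> = |g d>, i.e. (U_d f)(h) = f (h d^-1).  The walk operator
   W = \sum_(d in D) w d U_d, acting on functions G -> C. *)
Definition walk_op (w : G -> R[i]) (D : seq G) (f : G -> R[i]) : G -> R[i] :=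
  fun h => \sum_(d <- D) w d * f (h * d^-1)%g.

Definition unitary_l2 (T : (G -> R[i]) -> (G -> R[i])) : Prop :=
  (forall f, in_l2 f -> in_l2 (T f) /\ l2norm2 (T f) = l2norm2 f) /\
  (forall g, in_l2 g -> exists f, in_l2 f /\ T f = g).

Definition hom_scalar_qwalk (D : seq G) (w : G -> R[i]) : Prop :=
  (forall d, d \in D -> w d != 0) /\ unitary_l2 (walk_op w D).

End L2.

(* Suppose W = w_x U_x + w_y U_y + w_z U_z is an isometry of l^2(G).  For a
   relation u v^-1 = v u^-1 put g = u v^-1, so that g u = v and g v = u.
   Comparing the norms of W|1> and of W(|1> + |g>), whose u- and v-terms merge
   into (w_u + w_v)(|u> + |v>), gives Re(w_u conj(w_v)) = 0.  Hence w_x, w_y,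
   w_z are pairwise orthogonal in C = R^2, so one of them vanishes.  The points
   that must be distinct for this computation are separated by the map
   x, y, z |-> e_1, e_2, e_3 onto (Z/2)^3. *)
From mathcomp Require Import all_boot all_order all_algebra.
From mathcomp Require Import complex.
From mathcomp Require Import classical_sets reals constructive_ereal esum fsbigop cardinality.
From mathcomp Require Import ring lra.
Set Implicit Arguments. Unset Strict Implicit. Unset Printing Implicit Defensive.
Import Order.TTheory GRing.Theory Num.Theory.
Local Open Scope ring_scope.

Section ComplexPlane.
Variable R : realType.
Implicit Types a b c : R[i].

Definition cdot a b : R := complex.Re a * complex.Re b + complex.Im a * complex.Im b.
Definition cross a b : R := complex.Re a * complex.Im b - complex.Im a * complex.Re b.

Lemma csqnorm_gt0 a : (0 < csqnorm a) = (a != 0).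
Proof.
case: a => a1 a2; rewrite /csqnorm eq_complex /= lt_def paddr_eq0 ?sqr_ge0 //.
by rewrite !sqrf_eq0 negb_and addr_ge0 ?sqr_ge0 ?andbT.
Qed.

Lemma csqnorm1 : csqnorm (1 : R[i]) = 1.
Proof. by rewrite /csqnorm /= expr1n expr0n addr0. Qed.

Lemma csqnormD a b : csqnorm (a + b) = csqnorm a + csqnorm b + 2 * cdot a b.
Proof. by case: a => a1 a2; case: b => b1 b2; rewrite /csqnorm /cdot /=; ring. Qed.

Lemma csqnormM_cdot_cross a b : csqnorm a * csqnorm b = cdot a b ^+ 2 + cross a b ^+ 2.
Proof. by case: a => a1 a2; case: b => b1 b2; rewrite /csqnorm /cdot /cross /=; ring. Qed.

Lemma csqnormM_cdot a b c :
  csqnorm b * cdot a c = cdot a b * cdot b c - cross a b * cross b c.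
Proof.
by case: a => a1 a2; case: b => b1 b2; case: c => c1 c2; rewrite /csqnorm /cdot /cross /=; ring.
Qed.

Lemma orthogonal_cross_neq0 a b :
  a != 0 -> b != 0 -> cdot a b = 0 -> cross a b != 0.
Proof.
rewrite -!csqnorm_gt0 -sqrf_eq0 => a_gt0 b_gt0 ab.
have := csqnormM_cdot_cross a b; rewrite ab expr0n /= add0r => <-.
by rewrite mulf_eq0 negb_or !gt_eqF.
Qed.

Lemma no_three_orthogonal a b c : a != 0 -> b != 0 -> c != 0 ->
  cdot a b = 0 -> cdot a c = 0 -> cdot b c = 0 -> False.
Proof.
move=> a_neq0 b_neq0 c_neq0 ab ac bc.
have := csqnormM_cdot a b c; rewrite ab ac bc mulr0 mul0r sub0r => /esym/eqP.
rewrite oppr_eq0; apply/negP.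
by apply: mulf_neq0; apply: orthogonal_cross_neq0.
Qed.

End ComplexPlane.

Section WalkOnDiracSums.
Variables (R : realType) (G : groupType).
Implicit Types (w : G -> R[i]) (D : seq G) (s : seq (G * R[i])).

Definition dirac (p h : G) : R[i] := (h == p)%:R.

Definition dirac_sum s (h : G) : R[i] := \sum_(pc <- s) pc.2 * dirac pc.1 h.

Definition l2_isometric (T : (G -> R[i]) -> G -> R[i]) : Prop :=
  forall f, in_l2 f -> l2norm2 (T f) = l2norm2 f.

Lemma dirac_sum_cons pc s h :
  dirac_sum (pc :: s) h = pc.2 * dirac pc.1 h + dirac_sum s h.
Proof. by rewrite /dirac_sum big_cons. Qed.

Lemma dirac_sum_notin s h : h \notin unzip1 s -> dirac_sum s h = 0.
Proof.
elim: s => [|pc s IHs]; first by rewrite /dirac_sum big_nil.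
rewrite inE negb_or => /andP[/negbTE hpc /IHs s0].
by rewrite dirac_sum_cons s0 /dirac hpc mulr0 addr0.
Qed.

Lemma dirac_sum_coef s pc : uniq (unzip1 s) -> pc \in s -> dirac_sum s pc.1 = pc.2.
Proof.
elim: s => [|q s IHs] //= /andP[qs us]; rewrite inE dirac_sum_cons.
case/orP=> [/eqP -> | pcs].
  by rewrite dirac_sum_notin // /dirac eqxx mulr1 addr0.
have pcq : pc.1 != q.1 by apply: contraNneq qs => <-; apply: map_f.
by rewrite /dirac (negbTE pcq) mulr0 add0r IHs.
Qed.

Lemma l2norm2_finsupp (f : G -> R[i]) (s : seq G) : uniq s ->
  (forall h, h \notin s -> f h = 0) ->
  l2norm2 f = (\sum_(p <- s) csqnorm (f p))%:E.
Proof.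
move=> us f0; rewrite /l2norm2.
transitivity (esum [set` s] (fun g => (csqnorm (f g))%:E)).
  rewrite [RHS]esum_mkcond; apply: eq_esum => h _.
  case: ifP => // /negbT; rewrite mem_setE => hs.
  by rewrite f0 // /csqnorm /= expr0n /= addr0.
rewrite esum_fset; last first.
- by move=> p _; rewrite lee_fin /csqnorm addr_ge0 // sqr_ge0.
- exact: finite_seq.
by rewrite -fsbig_seq // -sumEFin.
Qed.

Lemma l2norm2_dirac_sum s : uniq (unzip1 s) ->
  l2norm2 (dirac_sum s) = (\sum_(pc <- s) csqnorm pc.2)%:E.
Proof.
move=> us; rewrite (l2norm2_finsupp us) => [|h]; last exact: dirac_sum_notin.
by rewrite big_map; congr (_%:E); apply: eq_big_seq => pc /(dirac_sum_coef us) ->.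
Qed.

Lemma in_l2_dirac_sum s : uniq (unzip1 s) -> in_l2 (dirac_sum s).
Proof. by move=> us; rewrite /in_l2 l2norm2_dirac_sum // ltry. Qed.

Lemma walk_op_dirac_sum w D s :
  walk_op w D (dirac_sum s) = dirac_sum [seq ((pc.1 * d)%g, pc.2 * w d) | pc <- s, d <- D].
Proof.
apply: boolp.funext => h; rewrite /walk_op /dirac_sum big_allpairs_dep /= exchange_big /=.
apply: eq_bigr => pc _; rewrite big_distrr /=; apply: eq_bigr => d _.
by rewrite /dirac divg_eq mulrCA mulrA.
Qed.

Lemma walk_op_perm w D1 D2 : perm_eq D1 D2 -> walk_op w D1 = walk_op w D2.
Proof.
by move=> pD; apply: boolp.funext => f; apply: boolp.funext => h; apply: perm_big.
Qed.

Lemma isometric_walk_coef_orthogonal w (u v t : G) :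
  (u / v = v / u)%g -> uniq [:: u; v; t; u / v * t]%g ->
  l2_isometric (walk_op w [:: u; v; t]) -> cdot (w u) (w v) = 0.
Proof.
set g := (u / v)%g => uvC uniq_uvtg iso.
have gu : (g * u = v)%g by rewrite uvC mulgVK.
have gv : (g * v = u)%g by rewrite mulgVK.
have uniq_uvt := subseq_uniq (prefix_subseq [:: u; v; t] [:: g * t]%g) uniq_uvtg.
have u_neq_v : u != v by case/andP: uniq_uvtg; rewrite inE negb_or => /andP[].
have uniq_1g : uniq (unzip1 [:: (1%g, 1 : R[i]); (g, 1)]).
  by rewrite /= inE andbT eq_sym divg_eq1.
have := iso _ (@in_l2_dirac_sum [:: (1%g, 1)] isT).
rewrite walk_op_dirac_sum /= !mul1g !mul1r !l2norm2_dirac_sum //.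
rewrite !big_cons !big_nil csqnorm1 => -[norm_W1].
have := iso _ (in_l2_dirac_sum uniq_1g).
have -> : walk_op w [:: u; v; t] (dirac_sum [:: (1%g, 1); (g, 1)]) =
    dirac_sum [:: (u, w u + w v); (v, w u + w v); (t, w t); ((g * t)%g, w t)].
  rewrite walk_op_dirac_sum /= !mul1g !mul1r gu gv; apply: boolp.funext => h.
  by rewrite !dirac_sum_cons /dirac_sum big_nil /=; ring.
rewrite !l2norm2_dirac_sum // !big_cons !big_nil csqnorm1 csqnormD => -[norm_W1g].
lra.
Qed.

End WalkOnDiracSums.

Lemma group_hom1 (G H : groupType) (f : G -> H) : group_hom f -> f 1%g = 1%g.
Proof. by move=> fM; apply: (mulIg (f 1%g)); rewrite -fM !mul1g. Qed.

Lemma group_homV (G H : groupType) (f : G -> H) p :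
  group_hom f -> f (p^-1)%g = ((f p)^-1)%g.
Proof. by move=> fM; apply: (mulIg (f p)); rewrite -fM !mulVg group_hom1. Qed.

Lemma presents_uniq (G : groupType) (x y z : G) : presents x y z ->
  [/\ uniq [:: x; y; z; x / y * z], uniq [:: x; z; y; x / z * y]
    & uniq [:: y; z; x; y / z * x]]%g.
Proof.
case=> _ univ.
have [|phi [phiM phix phiy phiz _]] :=
  univ ('I_2 * 'I_2 * 'I_2)%type (ord_max, 1, 1)%g (1, ord_max, 1)%g (1, 1, ord_max)%g.
  by split; apply/eqP.
have phiF a b c : phi (a / b * c)%g = (phi a / phi b * phi c)%g.
  by rewrite !phiM group_homV.
by split; apply: (map_uniq (f := phi)); rewrite /= !phiF phix phiy phiz.
Qed.

Theorem mainTheorem6 (R : realType) (G : groupType) (x y z : G) :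
  presents x y z ->
  ~ (exists w : G -> R[i], hom_scalar_qwalk [:: x; y; z] w).
Proof.
move=> pres [w [w_neq0 [w_l2 _]]].
have [[xy_rel xz_rel yz_rel] _] := pres.
have [uniq_xyz uniq_xzy uniq_yzx] := presents_uniq pres.
have iso : l2_isometric (walk_op w [:: x; y; z]) by move=> f /w_l2[].
have wx_neq0 : w x != 0 by apply: w_neq0; rewrite !inE eqxx.
have wy_neq0 : w y != 0 by apply: w_neq0; rewrite !inE eqxx orbT.
have wz_neq0 : w z != 0 by apply: w_neq0; rewrite !inE eqxx !orbT.
apply: (no_three_orthogonal wx_neq0 wy_neq0 wz_neq0).
- exact: isometric_walk_coef_orthogonal xy_rel uniq_xyz iso.
- apply: isometric_walk_coef_orthogonal xz_rel uniq_xzy _.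
  by rewrite (walk_op_perm _ (_ : perm_eq _ [:: x; y; z])) // perm_cons (perm_rot 1 [:: y; z]).
- apply: isometric_walk_coef_orthogonal yz_rel uniq_yzx _.
  by rewrite (walk_op_perm _ (_ : perm_eq _ [:: x; y; z])) // (perm_rot 1 [:: x; y; z]).
Qed.
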